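(* Let $\rho\in\mathbb R$ and let $\kappa_{\mathbf a}:\mathbb H_\rho\times\mathbb H_\rho\to\mathbb C$ be a positive semi-definite Dirichlet series kernel with associated reproducing kernel Hilbert space $\mathscr H_{\mathbf a}$. Then $\mathscr H_{\mathbf a,\infty}:=\{f\in\mathscr H_{\mathbf a}:\lim_{s\to\infty}f(s)=0\}$ is a closed subspace of $\mathscr H_{\mathbf a}$. If $\lim_{t\to\infty}\lim_{r\to\infty}\kappa_{\mathbf a}(t,r)\ne0$, then the reproducing kernel $\kappa_{\mathbf a,\infty}$ of $\mathscr H_{\mathbf a,\infty}$ is $$\kappa_{\mathbf a,\infty}(s,u)=\kappa_{\mathbf a}(s,u)-\frac{\lim_{r\to\infty}\kappa_{\mathbf a}(s,r)\,\lim_{t\to\infty}\kappa_{\mathbf a}(t,u)}{\lim_{t\to\infty}\lim_{r\to\infty}\kappa_{\mathbf a}(t,r)},\quad s,u\in\mathbb H_\rho.$$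
   Context: $\mathbb H_\rho=\{\Re s>\rho\}$. Limits $s,t,r\to\infty$ are taken along the positive real axis. $\kappa_{\mathbf a}(s,u)=\sum_{m,n\ge1}a_{m,n}m^{-s}n^{-\bar u}$ is a Dirichlet series kernel on $\mathbb H_\rho$ if $(s,u)\mapsto\kappa_{\mathbf a}(s,\bar u)$ is regularly convergent on $\mathbb H_\rho\times\mathbb H_\rho$ (the double series converges at each point and every row and column series converges there). $\mathscr H_{\mathbf a}$ is the Hilbert space of functions on $\mathbb H_\rho$ with $\kappa_{\mathbf a}(\cdot,t)\in\mathscr H_{\mathbf a}$ and $\langle f,\kappa_{\mathbf a}(\cdot,t)\rangle=f(t)$. *)

From HB Require Import structures.
From mathcomp Require Import all_boot all_order all_algebra.
From mathcomp Require Import all_classical all_reals all_analysis.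
From mathcomp Require Import complex.
Import Order.TTheory GRing.Theory Num.Theory.
Import numFieldNormedType.Exports.

Set Implicit Arguments.
Unset Strict Implicit.
Unset Printing Implicit Defensive.

Local Open Scope classical_set_scope.
Local Open Scope ring_scope.
Local Open Scope complex_scope.

Section Defs.
Variable R : realType.
Local Notation C := (R[i]).

Definition in_half (rho : R) (s : C) : Prop := rho < complex.Re s.

Definition limr (g : R -> C) : C := lim ((fun r => (g r : C^o)) @ +oo).
Definition cvgr_to (g : R -> C) (l : C) : Prop :=
  (fun r => (g r : C^o)) @ +oo --> (l : C^o).

Definition cexp (z : C) : C :=
  (expR (complex.Re z))%:C * ((cos (complex.Im z))%:C + 'i * (sin (complex.Im z))%:C).
Definition npow_neg (n : nat) (s : C) : C := cexp (- s * (ln (n%:R : R))%:C).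

Definition series1_cvg (u : nat -> C) : Prop :=
  exists l : C, forall e : R, 0 < e -> exists N : nat, forall K : nat,
    (N <= K)%N -> `| \sum_(1 <= n < K.+1) u n - l | < e%:C.

Definition psum2 (x : nat -> nat -> C) (M N : nat) : C :=
  \sum_(1 <= m < M.+1) \sum_(1 <= n < N.+1) x m n.

Definition dseries_cvg_to (x : nat -> nat -> C) (L : C) : Prop :=
  forall e : R, 0 < e -> exists N0 : nat, forall M N : nat,
    (N0 <= M)%N -> (N0 <= N)%N -> `| psum2 x M N - L | < e%:C.

Definition dseries_sum (x : nat -> nat -> C) : C := xget 0 (dseries_cvg_to x).

Definition regularly_convergent (x : nat -> nat -> C) : Prop :=
  (exists L, dseries_cvg_to x L) /\
  (forall m, (1 <= m)%N -> series1_cvg (fun n => x m n)) /\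
  (forall n, (1 <= n)%N -> series1_cvg (fun m => x m n)).

(** kappa_a is a Dirichlet series kernel on H_rho:
    (s,u) |-> kappa_a(s, conj u) = sum a_{m,n} m^{-s} n^{-u} is regularly
    convergent at every point of H_rho x H_rho *)
Definition dirichlet_series_kernel (rho : R) (a : nat -> nat -> C) : Prop :=
  forall s u, in_half rho s -> in_half rho u ->
    regularly_convergent (fun m n => a m n * npow_neg m s * npow_neg n u).

(** kappa_a(s,u) = sum_{m,n>=1} a_{m,n} m^{-s} n^{-conj u} on H_rho x H_rho;
    functions on H_rho are represented as functions on C that vanish
    outside H_rho (extension by zero). *)
Definition dkernel (rho : R) (a : nat -> nat -> C) (s u : C) : C :=
  if asbool (in_half rho s /\ in_half rho u)
  then dseries_sum (fun m n => a m n * npow_neg m s * npow_neg n (u^*))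
  else 0.

Definition psd_kernel (rho : R) (K : C -> C -> C) : Prop :=
  forall (n : nat) (s : 'I_n -> C) (c : 'I_n -> C),
    (forall i, in_half rho (s i)) ->
    0 <= \sum_(i < n) \sum_(j < n) (c i)^* * c j * K (s i) (s j).

(** Hilbert spaces of functions on H_rho (functions C -> C vanishing off H_rho),
    with inner product ip, linear in the first argument *)
Definition hnorm (ip : (C -> C) -> (C -> C) -> C) (f : C -> C) : R :=
  Num.sqrt (complex.Re (ip f f)).

Definition is_subspace (V : set (C -> C)) : Prop :=
  V (fun _ => 0) /\
  (forall f g, V f -> V g -> V (fun s => f s + g s)) /\
  (forall (c : C) f, V f -> V (fun s => c * f s)).

Definition hcvg_to (ip : (C -> C) -> (C -> C) -> C)
    (u : nat -> C -> C) (f : C -> C) : Prop :=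
  forall e : R, 0 < e -> exists N : nat, forall n : nat,
    (N <= n)%N -> hnorm ip (fun s => u n s - f s) < e.

Definition hilbert_space_on (rho : R) (H : set (C -> C))
    (ip : (C -> C) -> (C -> C) -> C) : Prop :=
  is_subspace H /\
  (forall f, H f -> forall s, ~ in_half rho s -> f s = 0) /\
  (forall f g h, H f -> H g -> H h ->
     ip (fun s => f s + g s) h = ip f h + ip g h) /\
  (forall (c : C) f g, H f -> H g -> ip (fun s => c * f s) g = c * ip f g) /\
  (forall f g, H f -> H g -> ip g f = (ip f g)^*) /\
  (forall f, H f -> 0 <= ip f f) /\
  (forall f, H f -> ip f f = 0 -> f = (fun _ => 0)) /\
  (forall u : nat -> C -> C, (forall n, H (u n)) ->
     (forall e : R, 0 < e -> exists N : nat, forall m n : nat,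
        (N <= m)%N -> (N <= n)%N -> hnorm ip (fun s => u m s - u n s) < e) ->
     exists2 f, H f & hcvg_to ip u f).

Definition reproducing_kernel_of (rho : R) (V : set (C -> C))
    (ip : (C -> C) -> (C -> C) -> C) (k : C -> C -> C) : Prop :=
  forall t, in_half rho t ->
    V (fun s => k s t) /\ forall f, V f -> ip f (fun s => k s t) = f t.

Definition is_rkhs (rho : R) (K : C -> C -> C) (H : set (C -> C))
    (ip : (C -> C) -> (C -> C) -> C) : Prop :=
  hilbert_space_on rho H ip /\ reproducing_kernel_of rho H ip K.

Definition closed_subspace (H : set (C -> C)) (ip : (C -> C) -> (C -> C) -> C)
    (V : set (C -> C)) : Prop :=
  [/\ V `<=` H, is_subspace V &
      forall (u : nat -> C -> C) f, (forall n, V (u n)) -> H f ->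
        hcvg_to ip u f -> V f].

Definition H_inf (H : set (C -> C)) : set (C -> C) :=
  [set f | H f /\ cvgr_to (fun r => f r%:C) 0].

End Defs.

From HB Require Import structures.
From mathcomp Require Import all_boot all_order all_algebra.
From mathcomp Require Import all_classical all_reals all_analysis.
From mathcomp Require Import complex.
From mathcomp Require Import ring lra.
Import Order.TTheory GRing.Theory Num.Theory.
Import numFieldNormedType.Exports.

Set Implicit Arguments.
Unset Strict Implicit.
Unset Printing Implicit Defensive.

Local Open Scope classical_set_scope.
Local Open Scope ring_scope.
Local Open Scope complex_scope.

(* Fix s0 > rho.  Dividing out the weights m^-s0 n^-s0, the
   terms of kappa(t, r) at real t, r > s0 are those of the regularly convergent
   series at (s0, s0) times m^-(t-s0) n^-(r-s0); these weights are
   nonincreasing with first term 1, so two Abel summations give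
   |kappa(t, r) - a_{1,1}| <= 2 B (2^-(t-s0) + 2^-(r-s0)), where B bounds the
   rectangular partial sums.  Hence kappa(t, r) -> a_{1,1} as t, r -> oo, and
   |kappa(., p) - kappa(., q)|^2 = kappa(p,p) - kappa(q,p) - kappa(p,q) + kappa(q,q)
   tends to 0: the kernel functions kappa(., r) converge weakly to some g in H,
   so that f(r) = <f, kappa(., r)> -> <f, g>.  Thus H_{a,oo} is the orthogonal
   complement of g, a closed subspace with reproducing kernel
   kappa(s, u) - g(s) conj(g(u)) / <g, g>, and g(s), conj(g(u)) and <g, g> are
   the three limits in the formula. *)

Section RealAxisLimits.
Variable R : realType.
Local Notation C := R[i].

Lemma lec_addgt0r (x y : C) : (forall e : R, 0 < e -> x <= y + e%:C) -> x <= y.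
Proof.
move=> xy; apply/ler_addgt0Pr => -[e e'].
by rewrite ltcE /= => /andP[/eqP -> /xy].
Qed.

Lemma cvgr_toP (g : R -> C) (l : C) : cvgr_to g l <->
  forall e : R, 0 < e -> exists T : R, forall r, T < r -> `|g r - l| < e%:C.
Proof.
split=> [/cvgrPdist_lt gl e e_gt0|gl].
  have [T [_ HT]] := gl e%:C ltac:(by rewrite ltcR).
  by exists T => r /HT; rewrite distrC.
apply/cvgrPdist_lt => -[e e']; rewrite ltcE /= => /andP[/eqP -> /gl [T HT]].
by exists T; split=> [|r /HT]; rewrite ?num_real // distrC.
Qed.

Lemma limr_cvgr_to (g : R -> C) (l : C) : cvgr_to g l -> limr g = l.
Proof. by move=> gl; apply: (cvg_lim _ gl); exact: norm_hausdorff. Qed.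

Lemma cvgr_to_unique (g : R -> C) (l l' : C) : cvgr_to g l -> cvgr_to g l' -> l = l'.
Proof. by move=> /limr_cvgr_to <- /limr_cvgr_to <-. Qed.

Lemma cvgr_to_conj (g : R -> C) (l : C) :
  cvgr_to g l -> cvgr_to (fun r => (g r)^*) l^*.
Proof.
move=> /cvgr_toP gl; apply/cvgr_toP => e /gl [T HT].
by exists T => r /HT; rewrite -rmorphB normcJ.
Qed.

Lemma cvgr_to_eq (T : R) (g1 g2 : R -> C) (l : C) :
  (forall r, T < r -> g1 r = g2 r) -> cvgr_to g1 l -> cvgr_to g2 l.
Proof.
move=> g12 /cvgr_toP gl; apply/cvgr_toP => e /gl [T' HT'].
exists (Num.max T T') => r; rewrite gt_max => /andP[Tr T'r].
by rewrite -g12 // HT'.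
Qed.

End RealAxisLimits.

Section InnerProductSpace.
Variables (R : realType) (rho : R) (H : set (R[i] -> R[i]))
  (ip : (R[i] -> R[i]) -> (R[i] -> R[i]) -> R[i]).
Local Notation C := R[i].
Hypothesis hs : hilbert_space_on rho H ip.

Lemma hmem0 : H (fun _ => 0). Proof. by case: hs => -[]. Qed.

Lemma hmemD f g : H f -> H g -> H (fun s => f s + g s).
Proof. by case: hs => -[_ [memD _]] _; apply: memD. Qed.

Lemma hmemZ c f : H f -> H (fun s => c * f s).
Proof. by case: hs => -[_ [_ memZ]] _; apply: memZ. Qed.

Lemma hmemB f g : H f -> H g -> H (fun s => f s - g s).
Proof.
move=> Hf Hg; have := hmemD Hf (hmemZ (-1) Hg).
by congr H; apply: funext => s; rewrite mulN1r.
Qed.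

Lemma hmem_vanish f s : H f -> ~ in_half rho s -> f s = 0.
Proof. by case: hs => _ [vanish _] Hf; apply: vanish. Qed.

Lemma ipDl f g h : H f -> H g -> H h ->
  ip (fun s => f s + g s) h = ip f h + ip g h.
Proof. by case: hs => _ [_ [ipD _]]; apply: ipD. Qed.

Lemma ipZl c f g : H f -> H g -> ip (fun s => c * f s) g = c * ip f g.
Proof. by case: hs => _ [_ [_ [ipZ _]]]; apply: ipZ. Qed.

Lemma ipC f g : H f -> H g -> ip g f = (ip f g)^*.
Proof. by case: hs => _ [_ [_ [_ [ipC _]]]]; apply: ipC. Qed.

Lemma ip_ge0 f : H f -> 0 <= ip f f.
Proof. by case: hs => _ [_ [_ [_ [_ [ip_ge0 _]]]]]; apply: ip_ge0. Qed.

Lemma ip_eq0 f : H f -> ip f f = 0 -> f = (fun _ => 0).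
Proof. by case: hs => _ [_ [_ [_ [_ [_ [ip_eq0 _]]]]]]; apply: ip_eq0. Qed.

Lemma ip_complete (u : nat -> C -> C) : (forall n, H (u n)) ->
  (forall e : R, 0 < e -> exists N : nat, forall m n : nat,
     (N <= m)%N -> (N <= n)%N -> hnorm ip (fun s => u m s - u n s) < e) ->
  exists2 f, H f & hcvg_to ip u f.
Proof. by case: hs => _ [_ [_ [_ [_ [_ [_ complete]]]]]]; apply: complete. Qed.

Lemma ipBl f g h : H f -> H g -> H h ->
  ip (fun s => f s - g s) h = ip f h - ip g h.
Proof.
move=> Hf Hg Hh; have -> : (fun s => f s - g s) = (fun s => f s + (-1) * g s).
  by apply: funext => s; rewrite mulN1r.
by rewrite ipDl ?ipZl ?mulN1r //; exact: hmemZ.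
Qed.

Lemma ip0l g : H g -> ip (fun _ => 0) g = 0.
Proof.
move=> Hg; have -> : (fun _ => 0) = (fun s => 0 * g s).
  by apply: funext => s; rewrite mul0r.
by rewrite ipZl ?mul0r.
Qed.

Lemma ip0r g : H g -> ip g (fun _ => 0) = 0.
Proof. by move=> Hg; rewrite ipC ?ip0l ?conjc0 //; exact: hmem0. Qed.

Lemma ipDr f g h : H f -> H g -> H h ->
  ip h (fun s => f s + g s) = ip h f + ip h g.
Proof.
move=> Hf Hg Hh; rewrite ipC ?ipDl ?rmorphD ?(ipC Hf Hh) ?(ipC Hg Hh) //.
exact: hmemD.
Qed.

Lemma ipZr c f g : H f -> H g -> ip g (fun s => c * f s) = c^* * ip g f.
Proof.
by move=> Hf Hg; rewrite ipC ?ipZl ?rmorphM ?(ipC Hf Hg) //; exact: hmemZ.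
Qed.

Lemma ipBr f g h : H f -> H g -> H h ->
  ip h (fun s => f s - g s) = ip h f - ip h g.
Proof.
move=> Hf Hg Hh; rewrite ipC ?ipBl ?rmorphB ?(ipC Hf Hh) ?(ipC Hg Hh) //.
exact: hmemB.
Qed.

Lemma ip_realE f : H f -> ip f f = (complex.Re (ip f f))%:C.
Proof. by move=> /ip_ge0 /ger0_real /RRe_real ->. Qed.

Lemma hnorm_ge0 f : 0 <= hnorm ip f.
Proof. exact: sqrtr_ge0. Qed.

Lemma hnorm_sqr f : H f -> hnorm ip f ^+ 2 = complex.Re (ip f f).
Proof.
move=> Hf; rewrite /hnorm sqr_sqrtr //.
by move: (ip_ge0 Hf); rewrite lecE => /andP[].
Qed.

Lemma hnorm_lt f (e : R) : H f -> 0 < e -> `|ip f f| < (e ^+ 2)%:C ->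
  hnorm ip f < e.
Proof.
move=> Hf e_gt0; rewrite ger0_norm ?ip_ge0 // {1}ip_realE // ltcR => ff_lt.
rewrite -hnorm_sqr // in ff_lt.
by rewrite -ltr_sqr ?nnegrE ?hnorm_ge0 ?(ltW e_gt0).
Qed.

Lemma cauchy_schwarz f g : H f -> H g ->
  `|ip f g| <= (hnorm ip f * hnorm ip g)%:C.
Proof.
move=> Hf Hg; have [gg0|gg_neq0] := eqVneq (ip g g) 0.
  by rewrite (ip_eq0 Hg gg0) ip0r ?normr0 ?ler0c ?mulr_ge0 ?hnorm_ge0.
have gg_gt0 : 0 < ip g g by rewrite lt_def gg_neq0 ip_ge0.
(* with this choice of lam, v is orthogonal to g, so <v, v> = <v, f> *)
set lam := ip f g / ip g g; set v := fun s => f s + - lam * g s.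
have Hv : H v by apply: hmemD => //; exact: hmemZ.
have vg : ip v g = 0 by rewrite ipDl ?ipZl //; [rewrite /lam; field | exact: hmemZ].
have := ip_ge0 Hv; rewrite {2}/v ipDr ?ipZr ?vg ?mulr0 ?addr0 //; last exact: hmemZ.
rewrite ipDl ?ipZl ?(ipC Hf Hg) //; last exact: hmemZ.
have -> : ip f f + - lam * (ip f g)^* = ip f f - ip f g * (ip f g)^* / ip g g.
  by rewrite /lam; field.
rewrite subr_ge0 ler_pdivrMr // -sqr_normc => fg_le.
rewrite -ler_sqr ?nnegrE ?normr_ge0 ?ler0c ?mulr_ge0 ?hnorm_ge0 //.
apply: (le_trans fg_le).
by rewrite -rmorphXn exprMn !hnorm_sqr // rmorphM /= -!ip_realE.
Qed.

Definition orthogonal_to (g : C -> C) : set (C -> C) := [set f | H f /\ ip f g = 0].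

Lemma closed_subspace_orthogonal_to g : H g -> closed_subspace H ip (orthogonal_to g).
Proof.
move=> Hg; split; first by move=> f [].
  split; [|split].
  - by split; [exact: hmem0 | exact: ip0l].
  - move=> f1 f2 [H1 e1] [H2 e2]; split; first exact: hmemD.
    by rewrite ipDl // e1 e2 addr0.
  - move=> c f [Hf e]; split; first exact: hmemZ.
    by rewrite ipZl // e mulr0.
move=> u f u_orth Hf u_cvg; split => //.
apply/eqP; rewrite -normr_le0; apply: lec_addgt0r => e e_gt0; rewrite add0r.
have gn1_gt0 : 0 < hnorm ip g + 1 by rewrite ltr_wpDl ?hnorm_ge0.
have [N uN_near] := u_cvg (e / (hnorm ip g + 1)) (divr_gt0 e_gt0 gn1_gt0).
have [HuN uNg] := u_orth N.
have -> : ip f g = - ip (fun s => u N s - f s) g by rewrite ipBl // uNg sub0r opprK.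
rewrite normrN; apply: (le_trans (cauchy_schwarz (hmemB HuN Hf) Hg)).
have := uN_near N (leqnn N); rewrite lecR ltr_pdivlMr // => /ltW.
by apply: le_trans; rewrite ler_wpM2l ?hnorm_ge0 // lerDl.
Qed.

End InnerProductSpace.

Definition real_double_limit (R : realType) (k : R[i] -> R[i] -> R[i]) (L : R[i]) :=
  forall e : R, 0 < e -> exists T : R, forall t r : R,
    T < t -> T < r -> `|k t%:C r%:C - L| < e%:C.

Section ReproducingKernel.
Variables (R : realType) (rho : R) (H : set (R[i] -> R[i]))
  (ip : (R[i] -> R[i]) -> (R[i] -> R[i]) -> R[i]) (K : R[i] -> R[i] -> R[i]).
Local Notation C := R[i].
Hypotheses (hs : hilbert_space_on rho H ip) (hK : reproducing_kernel_of rho H ip K).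

Lemma kernel_mem t : in_half rho t -> H (fun s => K s t).
Proof. by move=> t_in; case: (hK t_in). Qed.

Lemma kernel_reproduces t f : in_half rho t -> H f -> ip f (fun s => K s t) = f t.
Proof. by move=> t_in Hf; case: (hK t_in) => _; apply. Qed.

Lemma kernel_conj s t : in_half rho s -> in_half rho t -> K t s = (K s t)^*.
Proof.
move=> s_in t_in; have Ks := kernel_mem s_in; have Kt := kernel_mem t_in.
by rewrite -(kernel_reproduces s_in Kt) -(ipC hs) ?kernel_reproduces.
Qed.

Lemma reproducing_kernel_orthogonal_to g : H g -> ip g g != 0 ->
  reproducing_kernel_of rho (orthogonal_to H ip g) ip
    (fun s t => K s t - g s * (g t)^* / ip g g).
Proof.
move=> Hg gg_neq0 t t_in; set c := (g t)^* / ip g g.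
have -> : (fun s => K s t - g s * (g t)^* / ip g g) = (fun s => K s t + - c * g s).
  by apply: funext => s; rewrite /c; ring.
have Kt := kernel_mem t_in.
have Hcg : H (fun s => - c * g s) by exact (hmemZ hs (- c) Hg).
split.
  split; first exact (hmemD hs Kt Hcg).
  rewrite (ipDl hs) ?(ipZl hs) // (ipC hs) ?kernel_reproduces //.
  by rewrite /c; field.
move=> f [Hf fg]; rewrite (ipDr hs) ?(ipZr hs) //.
by rewrite fg mulr0 addr0 kernel_reproduces.
Qed.

Hypothesis K_vanish : forall s t, ~ (in_half rho s /\ in_half rho t) -> K s t = 0.
Variable L : C.
Hypothesis K_lim : real_double_limit K L.

Lemma kernel_mem_any t : H (fun s => K s t).
Proof.
have [t_in|t_out] := pselect (in_half rho t); first exact: kernel_mem.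
have -> : (fun s => K s t) = (fun _ => 0) by apply: funext => s; apply: K_vanish => -[].
exact: hmem0 hs.
Qed.

Lemma kernel_col_cauchy (e : R) : 0 < e -> exists T : R, forall p q : R,
  T < p -> T < q -> hnorm ip (fun s => K s p%:C - K s q%:C) < e.
Proof.
move=> e_gt0; have e4_gt0 : 0 < e ^+ 2 / 4%:R by rewrite divr_gt0 ?exprn_gt0.
have [T near_L] := K_lim e4_gt0.
exists (Num.max rho T) => p q; rewrite !gt_max => /andP[p_in Tp] /andP[q_in Tq].
have Kp := kernel_mem (p_in : in_half rho p%:C).
have Kq := kernel_mem (q_in : in_half rho q%:C).
apply: (hnorm_lt hs (hmemB hs Kp Kq) e_gt0).
rewrite (ipBl hs) ?(ipBr hs) //; last exact (hmemB hs Kp Kq).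
rewrite !(kernel_reproduces (p_in : in_half rho p%:C)) //.
rewrite !(kernel_reproduces (q_in : in_half rho q%:C)) //.
have -> : K p%:C p%:C - K q%:C p%:C - (K p%:C q%:C - K q%:C q%:C) =
    (K p%:C p%:C - L) - (K q%:C p%:C - L) - ((K p%:C q%:C - L) - (K q%:C q%:C - L)).
  by ring.
have -> : (e ^+ 2)%:C = (e ^+ 2 / 4%:R)%:C + (e ^+ 2 / 4%:R)%:C
    + ((e ^+ 2 / 4%:R)%:C + (e ^+ 2 / 4%:R)%:C) :> C.
  by rewrite -!rmorphD; congr (_%:C); field.
by apply: (le_lt_trans (ler_normB _ _)); apply: ltrD;
  apply: (le_lt_trans (ler_normB _ _)); apply: ltrD; exact: near_L.
Qed.

Lemma kernel_col_weak_limit : exists2 g, H g &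
  forall f, H f -> cvgr_to (fun r => ip f (fun s => K s r%:C)) (ip f g).
Proof.
pose u n := fun s => K s (n%:R : R)%:C.
have nat_gt (T : R) : T < (Num.bound `|T|)%:R.
  exact: le_lt_trans (ler_norm T) (archi_boundP (normr_ge0 T)).
have [g Hg u_cvg] : exists2 g, H g & hcvg_to ip u g.
  apply: (ip_complete hs) => [n|e /kernel_col_cauchy [T K_cauchy]].
    exact: kernel_mem_any.
  exists (Num.bound `|T|) => m n Tm Tn.
  by apply: K_cauchy; apply: (lt_le_trans (nat_gt T)); rewrite ler_nat.
exists g => // f Hf; apply/cvgr_toP => e e_gt0.
pose e' := e / (2 * (hnorm ip f + 1)).
have e'_gt0 : 0 < e' by rewrite divr_gt0 ?mulr_gt0 ?ltr_wpDl ?hnorm_ge0.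
have [T K_cauchy] := kernel_col_cauchy e'_gt0.
have [N u_near] := u_cvg e' e'_gt0.
pose n := maxn N (Num.bound `|T|).
have Tn : T < n%:R by apply: (lt_le_trans (nat_gt T)); rewrite ler_nat leq_maxr.
have Hun : H (u n) by exact: kernel_mem_any.
exists T => p Tp; have Hp := kernel_mem_any p%:C.
have -> : ip f (fun s => K s p%:C) - ip f g =
    ip f (fun s => K s p%:C - u n s) + ip f (fun s => u n s - g s).
  by rewrite !(ipBr hs) //; ring.
apply: (le_lt_trans (ler_normD _ _)).
apply: (le_lt_trans (lerD (cauchy_schwarz hs Hf (hmemB hs Hp Hun))
                          (cauchy_schwarz hs Hf (hmemB hs Hun Hg)))).
rewrite -rmorphD ltcR -mulrDr /u.
have := K_cauchy p n%:R Tp Tn; have := u_near n (leq_maxl _ _); rewrite /u.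
have e'E : e' * (2 * (hnorm ip f + 1)) = e.
  by rewrite divfK // mulf_neq0 ?pnatr_eq0 // gt_eqF // ltr_wpDl ?hnorm_ge0.
have := hnorm_ge0 ip f; nra.
Qed.

Section KernelLimit.
Variable g : C -> C.
Hypotheses (Hg : H g)
  (g_lim : forall f, H f -> cvgr_to (fun r => ip f (fun s => K s r%:C)) (ip f g)).

Lemma eval_cvgr_to f : H f -> cvgr_to (fun r => f r%:C) (ip f g).
Proof.
move=> Hf; apply: (cvgr_to_eq (T := rho)) (g_lim Hf) => r r_in.
exact: (kernel_reproduces (r_in : in_half rho r%:C)).
Qed.

Lemma kernel_cvgr_to_right s : cvgr_to (fun r => K s r%:C) (g s).
Proof.
have [s_in|s_out] := pselect (in_half rho s); last first.
  rewrite (hmem_vanish hs Hg s_out).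
  apply: (cvgr_to_eq (T := 0)) (cvg_cst (0 : C^o)) => r _.
  by rewrite K_vanish // => -[].
have Ks := kernel_mem s_in.
have := cvgr_to_conj (g_lim Ks).
rewrite -(ipC hs Ks Hg) (kernel_reproduces s_in Hg).
apply: (cvgr_to_eq (T := rho)) => r r_in.
have Kr := kernel_mem (r_in : in_half rho r%:C).
by rewrite -(ipC hs Ks Kr) (kernel_reproduces s_in Kr).
Qed.

Lemma kernel_cvgr_to_left u : cvgr_to (fun t => K t%:C u) (g u)^*.
Proof.
have [u_in|u_out] := pselect (in_half rho u); last first.
  rewrite (hmem_vanish hs Hg u_out) conjc0.
  apply: (cvgr_to_eq (T := 0)) (cvg_cst (0 : C^o)) => t _.
  by rewrite K_vanish // => -[].
apply: (cvgr_to_eq (T := rho)) (cvgr_to_conj (@kernel_cvgr_to_right u)) => t t_in.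
by rewrite (kernel_conj u_in (t_in : in_half rho t%:C)).
Qed.

Lemma H_inf_orthogonal_to : H_inf H = orthogonal_to H ip g.
Proof.
apply/seteqP; split=> f [Hf f_lim]; split => //.
  exact: cvgr_to_unique (eval_cvgr_to Hf) f_lim.
by rewrite -f_lim; exact: eval_cvgr_to.
Qed.

End KernelLimit.

Lemma H_inf_closed_subspace : closed_subspace H ip (H_inf H).
Proof.
have [g Hg g_lim] := kernel_col_weak_limit.
rewrite (H_inf_orthogonal_to g_lim); exact (closed_subspace_orthogonal_to hs Hg).
Qed.

Lemma H_inf_reproducing_kernel :
  limr (fun t => limr (fun r => K t%:C r%:C)) != 0 ->
  reproducing_kernel_of rho (H_inf H) ip
    (fun s u => K s u - limr (fun r => K s r%:C) * limr (fun t => K t%:C u)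
                        / limr (fun t => limr (fun r => K t%:C r%:C))).
Proof.
have [g Hg g_lim] := kernel_col_weak_limit.
have lim_right s : limr (fun r => K s r%:C) = g s.
  exact/limr_cvgr_to/kernel_cvgr_to_right.
have lim_left u : limr (fun t => K t%:C u) = (g u)^*.
  exact/limr_cvgr_to/kernel_cvgr_to_left.
have lim_gg : limr (fun t => limr (fun r => K t%:C r%:C)) = ip g g.
  rewrite (_ : (fun t => _) = (fun t => g t%:C)); last exact: funext.
  exact/limr_cvgr_to/eval_cvgr_to.
rewrite lim_gg (H_inf_orthogonal_to g_lim) => gg_neq0.
rewrite (_ : (fun s u => _) = (fun s u => K s u - g s * (g u)^* / ip g g)).
  exact (reproducing_kernel_orthogonal_to Hg gg_neq0).
by apply: funext => s; apply: funext => u; rewrite lim_right lim_left.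
Qed.

End ReproducingKernel.

Section AbelSummation.
Variables (D : numDomainType) (x : nat -> D).

Definition abel_sum (a M : nat) (F : nat -> D) : D :=
  \sum_(a <= j < M.+1) (x j - x j.+1) * F j + x M.+1 * F M.

Lemma summation_by_parts (u : nat -> D) M :
  \sum_(1 <= m < M.+1) u m * x m = abel_sum 1 M (fun j => \sum_(1 <= m < j.+1) u m).
Proof.
elim: M => [|M IH]; first by rewrite /abel_sum !big_geq // mulr0 addr0.
rewrite /abel_sum in IH *; rewrite big_nat_recr //= IH.
rewrite [\sum_(1 <= j < M.+2) _]big_nat_recr //=.
by rewrite [\sum_(1 <= m < M.+2) u m]big_nat_recr //=; ring.
Qed.

Lemma abel_sumB a M F G :
  abel_sum a M (fun j => F j - G j) = abel_sum a M F - abel_sum a M G.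
Proof.
by rewrite /abel_sum; under eq_bigr do rewrite mulrBr; rewrite sumrB; ring.
Qed.

Lemma abel_sum_sum (I : Type) (r : seq I) a M (F : I -> nat -> D) :
  abel_sum a M (fun j => \sum_(i <- r) F i j) = \sum_(i <- r) abel_sum a M (F i).
Proof.
rewrite /abel_sum big_split /= -mulr_sumr; congr (_ + _).
by under eq_bigr do rewrite mulr_sumr; exact: exchange_big.
Qed.

Lemma abel_sum_split a M F : (a <= M)%N ->
  abel_sum a M F = (x a - x a.+1) * F a + abel_sum a.+1 M F.
Proof. by move=> aM; rewrite /abel_sum big_ltn ?ltnS // addrA. Qed.

Lemma abel_sum_cst a M c : (a <= M.+1)%N -> abel_sum a M (fun _ => c) = x a * c.
Proof.
move=> aM; rewrite /abel_sum -mulr_suml.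
have -> : \sum_(a <= j < M.+1) (x j - x j.+1) = x a - x M.+1.
  rewrite -(opprB (x M.+1)) -telescope_sumr // -sumrN.
  by apply: eq_bigr => j _; rewrite opprB.
by ring.
Qed.

Hypotheses (x_ge0 : forall j, 0 <= x j) (x_noninc : forall j, x j.+1 <= x j).

Lemma norm_abel_sum_le a M F b : (0 < a)%N -> (a <= M.+1)%N -> (0 < M)%N ->
  (forall j, (0 < j <= M)%N -> `|F j| <= b) -> `|abel_sum a M F| <= x a * b.
Proof.
move=> a_gt0 aM M_gt0 F_le; rewrite -(abel_sum_cst b aM) /abel_sum.
apply: (le_trans (ler_normD _ _)); apply: lerD.
  apply: (le_trans (ler_norm_sum _ _ _)); rewrite big_nat [leRHS]big_nat.
  apply: ler_sum => j /andP[aj jM]; rewrite normrM ger0_norm ?subr_ge0 //.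
  by apply: ler_wpM2l; rewrite ?subr_ge0 // F_le // (leq_trans a_gt0 aj) -ltnS.
by rewrite normrM ger0_norm // ler_wpM2l // F_le // M_gt0 /=.
Qed.

Lemma abel_sum_first_le M F b : (0 < M)%N -> x 1%N = 1 ->
  (forall j, (0 < j <= M)%N -> `|F j - F 1%N| <= b) ->
  `|abel_sum 1 M F - F 1%N| <= x 2 * b.
Proof.
move=> M_gt0 x1 F_le.
have -> : abel_sum 1 M F - F 1%N = abel_sum 1 M (fun j => F j - F 1%N).
  by rewrite abel_sumB abel_sum_cst // x1 mul1r.
by rewrite abel_sum_split // subrr mulr0 add0r; exact: norm_abel_sum_le.
Qed.

End AbelSummation.

Section DoubleSeries.
Variable R : realType.
Local Notation C := R[i].

Lemma psum2_weighted_corner_le (c : nat -> nat -> C) (x y : nat -> C) (B : C) M N :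
  (0 < M)%N -> (0 < N)%N -> x 1%N = 1 -> y 1%N = 1 ->
  (forall j, 0 <= x j) -> (forall j, x j.+1 <= x j) ->
  (forall j, 0 <= y j) -> (forall j, y j.+1 <= y j) ->
  (forall m n, (0 < m)%N -> (0 < n)%N -> `|psum2 c m n| <= B) ->
  `|psum2 (fun m n => c m n * x m * y n) M N - c 1%N 1%N| <= B *+ 2 * (x 2 + y 2).
Proof.
move=> M_gt0 N_gt0 x1 y1 x_ge0 x_noninc y_ge0 y_noninc c_le.
pose S k := abel_sum x 1 M (fun j => psum2 c j k).
have -> : psum2 (fun m n => c m n * x m * y n) M N = abel_sum y 1 N S.
  rewrite /psum2; under eq_bigr do rewrite summation_by_parts.
  rewrite -abel_sum_sum; congr abel_sum; apply: funext => k.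
  by under eq_bigr do rewrite -mulr_suml; rewrite summation_by_parts.
have c11 : c 1%N 1%N = psum2 c 1 1 by rewrite /psum2 !big_nat1.
have c_diff m n m' n' : (0 < m)%N -> (0 < n)%N -> (0 < m')%N -> (0 < n')%N ->
    `|psum2 c m n - psum2 c m' n'| <= B *+ 2.
  by move=> *; apply: (le_trans (ler_normB _ _)); rewrite mulr2n lerD ?c_le.
(* both pieces are Abel sums minus their first term *)
have -> : abel_sum y 1 N S - c 1%N 1%N = abel_sum y 1 N (fun k => S k - psum2 c 1 k)
    + (abel_sum y 1 N (fun k => psum2 c 1 k) - psum2 c 1 1).
  by rewrite abel_sumB c11; ring.
have -> : B *+ 2 * (x 2 + y 2) = y 1%N * (x 2 * (B *+ 2)) + y 2 * (B *+ 2).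
  by rewrite y1; ring.
apply: (le_trans (ler_normD _ _)); apply: lerD.
  apply: norm_abel_sum_le => // k /andP[k_gt0 _].
  by apply: abel_sum_first_le => // j /andP[j_gt0 _]; exact: c_diff.
by apply: abel_sum_first_le => // k /andP[k_gt0 _]; exact: c_diff.
Qed.

End DoubleSeries.

Section RegularConvergence.
Variable R : realType.
Local Notation C := R[i].

Lemma bounded_of_eventually_bounded (f : nat -> C) N b :
  (forall K, (N <= K)%N -> `|f K| <= b) -> exists b' : C, forall K, `|f K| <= b'.
Proof.
move=> f_le; have b_ge0 : 0 <= b := le_trans (normr_ge0 _) (f_le N (leqnn N)).
exists (b + \sum_(i < N) `|f i|) => K; have [NK|KN] := leqP N K.
  by rewrite ler_wpDr ?sumr_ge0 // f_le.
by rewrite ler_wpDl // (bigD1 (Ordinal KN)) //= lerDl sumr_ge0.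
Qed.

Lemma series1_cvg_bounded (u : nat -> C) : series1_cvg u ->
  exists b : C, forall K, `|\sum_(1 <= n < K.+1) u n| <= b.
Proof.
move=> [l /(_ 1 ltr01) [N u_near]].
apply: (bounded_of_eventually_bounded (N := N) (b := 1 + `|l|)) => K /u_near /ltW u_le.
by rewrite -[X in `|X|](subrK l); apply: (le_trans (ler_normD _ _)); rewrite lerD2r.
Qed.

Lemma psum2_bounded_short_rows (c : nat -> nat -> C) N0 :
  (forall m, (0 < m)%N -> series1_cvg (fun n => c m n)) ->
  exists2 b : C, 0 <= b & forall m n, (m < N0)%N -> `|psum2 c m n| <= b.
Proof.
move=> rows_cvg.
have /choice [b b_le] : forall m, exists b : C, forall K, (0 < m)%N ->
    `|\sum_(1 <= n < K.+1) c m n| <= b.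
  move=> m; have [->|m_gt0] := posnP m; first by exists 0.
  by have [b b_le] := series1_cvg_bounded (rows_cvg m m_gt0); exists b.
have b_ge0 m : (0 < m)%N -> 0 <= b m.
  by move=> m_gt0; exact: le_trans (b_le m 0%N m_gt0).
exists (\sum_(1 <= m < N0) b m) => [|m n mN0].
  by rewrite big_nat sumr_ge0 // => m /andP[m_gt0 _]; exact: b_ge0.
apply: (le_trans (ler_norm_sum _ _ _)).
apply: (@le_trans _ _ (\sum_(1 <= i < m.+1) b i)).
  by rewrite big_nat [leRHS]big_nat; apply: ler_sum => i /andP[i_gt0 _]; exact: b_le.
exact: (nondecreasing_series (fun i _ _ => b_ge0 i _)) mN0.
Qed.

Lemma psum2_bounded (c : nat -> nat -> C) : regularly_convergent c ->
  exists B : R, forall m n, (0 < m)%N -> (0 < n)%N -> `|psum2 c m n| <= B%:C.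
Proof.
move=> [[L /(_ 1 ltr01) [N0 c_near]] [rows_cvg cols_cvg]].
have [br br_ge0 br_le] := psum2_bounded_short_rows N0 rows_cvg.
have [bc bc_ge0 bc_le] := psum2_bounded_short_rows (c := fun n m => c m n) N0 cols_cvg.
pose B : C := `|L| + 1 + br + bc.
have B_ge0 : 0 <= B by rewrite !addr_ge0.
exists (complex.Re B) => m n m_gt0 n_gt0; rewrite RRe_real ?ger0_real //.
have [mN0|N0m] := ltnP m N0.
  apply: (le_trans (br_le m n mN0)).
  by apply: ler_wpDr => //; apply: ler_wpDl; rewrite ?addr_ge0.
have [nN0|N0n] := ltnP n N0.
  rewrite /psum2 exchange_big; apply: (le_trans (bc_le n m nN0)).
  by apply: ler_wpDl; rewrite ?addr_ge0.
rewrite -[X in `|X|](subrK L); apply: (le_trans (ler_normD _ _)); rewrite addrC.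
by apply: ler_wpDr => //; apply: ler_wpDr => //; rewrite lerD2l ltW ?c_near.
Qed.

End RegularConvergence.

Lemma expRN_lt (R : realType) (z d : R) : 0 < d -> d^-1 < z -> expR (- z) < d.
Proof.
move=> d_gt0 dz; rewrite expRN -[ltRHS]invrK ltf_pV2 ?posrE ?expR_gt0 ?invr_gt0 //.
by apply: (lt_le_trans dz); apply: le_trans (expR_ge1Dx z); rewrite lerDr.
Qed.

Section DirichletKernel.
Variables (R : realType) (rho : R) (a : nat -> nat -> R[i]).
Local Notation C := R[i].

Lemma npow_neg_real n (t : R) : npow_neg n t%:C = (expR (- t * ln n%:R))%:C.
Proof.
by rewrite /npow_neg /cexp -rmorphN -rmorphM /= cos0 sin0 mulr0 addr0; simpc.
Qed.

Lemma npow_neg1 (s : C) : npow_neg 1 s = 1.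
Proof.
by rewrite /npow_neg /cexp ln1 mulr0 /= expR0 cos0 sin0 mulr0 addr0 mulr1.
Qed.

Lemma npow_negD n (s t : R) :
  npow_neg n (s + t)%:C = npow_neg n s%:C * npow_neg n t%:C.
Proof. by rewrite !npow_neg_real -rmorphM -expRD opprD mulrDl. Qed.

Lemma npow_neg_ge0 n (t : R) : 0 <= npow_neg n t%:C.
Proof. by rewrite npow_neg_real ler0c expR_ge0. Qed.

Lemma npow_neg_noninc (t : R) : 0 <= t ->
  forall j, npow_neg j.+1 t%:C <= npow_neg j t%:C.
Proof.
move=> t_ge0 j; rewrite !npow_neg_real lecR ler_expR !mulNr lerN2 ler_wpM2l //.
have [->|j_gt0] := posnP j; first by rewrite ln1 ln_le0.
by rewrite ler_ln ?posrE ?ltr0n // ler_nat.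
Qed.

Lemma dkernel_vanish s t : ~ (in_half rho s /\ in_half rho t) -> dkernel rho a s t = 0.
Proof. by move=> st_out; rewrite /dkernel asboolF. Qed.

Lemma dseries_sum_le (x : nat -> nat -> C) (z b : C) : (exists L, dseries_cvg_to x L) ->
  (forall M, (0 < M)%N -> `|psum2 x M M - z| <= b) -> `|dseries_sum x - z| <= b.
Proof.
move=> x_ex psum_le; apply: lec_addgt0r => e e_gt0.
have x_cvg : dseries_cvg_to x (dseries_sum x) := xgetPex 0 x_ex.
have [N x_near] := x_cvg e e_gt0; pose M := maxn N 1.
apply: (le_trans (ler_distD (psum2 x M M) _ _)); rewrite addrC.
by apply: lerD; rewrite ?psum_le ?leq_maxr // distrC ltW ?x_near ?leq_maxl.
Qed.

Hypothesis dsk : dirichlet_series_kernel rho a.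

Lemma dkernel_corner_le (s0 : R) : rho < s0 -> exists B : R, forall sig tau : R,
  0 < sig -> 0 < tau ->
  `|dkernel rho a (s0 + sig)%:C (s0 + tau)%:C - a 1%N 1%N|
    <= B%:C *+ 2 * (npow_neg 2 sig%:C + npow_neg 2 tau%:C).
Proof.
move=> s0_in; pose c m n := a m n * npow_neg m s0%:C * npow_neg n s0%:C.
have s0C : in_half rho s0%:C := s0_in.
have [B c_le] := psum2_bounded (dsk s0C s0C : regularly_convergent c).
exists B => sig tau sig_gt0 tau_gt0.
have t_in : in_half rho (s0 + sig)%:C by exact: ltr_wpDr (ltW sig_gt0) s0_in.
have r_in : in_half rho (s0 + tau)%:C by exact: ltr_wpDr (ltW tau_gt0) s0_in.
rewrite /dkernel asboolT // conjc_real.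
have terms_E : (fun m n => a m n * npow_neg m (s0 + sig)%:C * npow_neg n (s0 + tau)%:C)
    = (fun m n => c m n * npow_neg m sig%:C * npow_neg n tau%:C).
  by apply: funext => m; apply: funext => n; rewrite /c !npow_negD; ring.
rewrite terms_E; apply: dseries_sum_le => [|M M_gt0].
  by rewrite -terms_E; case: (dsk t_in r_in).
have c11 : c 1%N 1%N = a 1%N 1%N by rewrite /c !npow_neg1 !mulr1.
rewrite -c11; apply: psum2_weighted_corner_le; rewrite ?npow_neg1 //.
- by move=> j; exact: npow_neg_ge0.
- by move=> j; apply: npow_neg_noninc; exact: ltW.
- by move=> j; exact: npow_neg_ge0.
- by move=> j; apply: npow_neg_noninc; exact: ltW.
Qed.

Lemma dkernel_real_double_limit : real_double_limit (dkernel rho a) (a 1%N 1%N).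
Proof.
move=> e e_gt0; have s0_in : rho < rho + 1 by rewrite ltrDl.
have [B k_le] := dkernel_corner_le s0_in.
pose d := e / (4 * (`|B| + 1)).
have d_gt0 : 0 < d by rewrite divr_gt0 // mulr_gt0 // ltr_wpDl.
have dE : d * (4 * (`|B| + 1)) = e by rewrite divfK // gt_eqF // mulr_gt0 // ltr_wpDl.
have ln2_gt0 : 0 < ln (2 : R) by rewrite ln_gt0 // ltr1n.
have w_lt sig : (d * ln 2)^-1 < sig -> expR (- sig * ln 2) < d.
  move=> sig_big; rewrite mulNr expRN_lt //.
  by rewrite -ltr_pdivrMr // -invfM.
have w_ge0 sig : 0 <= expR (- sig * ln (2 : R)) by exact: expR_ge0.
exists (rho + 1 + (d * ln 2)^-1) => t r Tt Tr.
have [sig -> sig_big] : exists2 sig, t = rho + 1 + sig & (d * ln 2)^-1 < sig.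
  by exists (t - (rho + 1)); rewrite ?subrKC // ltrBrDl.
have [tau -> tau_big] : exists2 tau, r = rho + 1 + tau & (d * ln 2)^-1 < tau.
  by exists (r - (rho + 1)); rewrite ?subrKC // ltrBrDl.
have inv_gt0 : 0 < (d * ln 2)^-1 by rewrite invr_gt0 mulr_gt0.
have sig_gt0 := lt_trans inv_gt0 sig_big; have tau_gt0 := lt_trans inv_gt0 tau_big.
apply: (le_lt_trans (k_le sig tau sig_gt0 tau_gt0)).
rewrite !npow_neg_real -rmorphD -rmorphMn -rmorphM ltcR.
have := w_lt _ sig_big; have := w_lt _ tau_big; have := w_ge0 sig; have := w_ge0 tau.
have := ler_norm B; have := normr_ge0 B.
nra.
Qed.

End DirichletKernel.

Unset Implicit Arguments.

Theorem corollary2p7 (R : realType) (rho : R) (a : nat -> nat -> R[i])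
    (H : set (R[i] -> R[i])) (ip : (R[i] -> R[i]) -> (R[i] -> R[i]) -> R[i]) :
  dirichlet_series_kernel rho a ->
  psd_kernel rho (dkernel rho a) ->
  is_rkhs rho (dkernel rho a) H ip ->
  closed_subspace H ip (H_inf H) /\
  (limr (fun t => limr (fun r => dkernel rho a t%:C r%:C)) != 0 ->
   reproducing_kernel_of rho (H_inf H) ip
     (fun s u => dkernel rho a s u
        - limr (fun r => dkernel rho a s r%:C)
          * limr (fun t => dkernel rho a t%:C u)
          / limr (fun t => limr (fun r => dkernel rho a t%:C r%:C)))).
Proof.
move=> dsk _ [hs hK].
have vanish := @dkernel_vanish R rho a.
have lim := dkernel_real_double_limit dsk.
split; first exact (H_inf_closed_subspace hs hK vanish lim).
exact (H_inf_reproducing_kernel hs hK vanish lim).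
Qed.
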